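(* Let $\mathcal{X}=\{x_1,\dots,x_n\}$, let $\mathcal{X}_{\mathrm{in}}\subseteq\mathcal{X}$ have $n_{\mathrm{in}}\ge2$ points, let $1\le n_{\mathrm{out}}\le n_{\mathrm{in}}$, and let $\mathcal{X}_{\mathrm{out}}$ be a subset of $\mathcal{X}_{\mathrm{in}}$ of size $n_{\mathrm{out}}$ chosen uniformly at random (i.e., uniform subsampling without replacement). Then for every symmetric positive semidefinite $K\in\mathbb{R}^{n\times n}$ and every $\mathcal{I}\subseteq[n]$, $$\mathbb{E}\big[\mathrm{MMD}_K^2(p_{\mathrm{in}},q_{\mathrm{out}})\big]=\frac{1}{n_{\mathrm{out}}}\cdot\frac{n_{\mathrm{in}}-n_{\mathrm{out}}}{n_{\mathrm{in}}-1}\,C_K$$ and $$\mathbb{E}\big[\|K(p_{\mathrm{in}}-q_{\mathrm{out}})\|_{\mathcal{I}}^2\big]\ge\frac{1}{n_{\mathrm{out}}}\cdot\frac{n_{\mathrm{in}}-n_{\mathrm{out}}}{n_{\mathrm{in}}-1}\,\max_{i\in\mathcal{I}}C_{Ke_ie_i^\top K},$$ where for an $n\times n$ matrix $M$, $C_M:=\sum_{i=1}^n p_{\mathrm{in},i}M_{ii}-p_{\mathrm{in}}^\top Mp_{\mathrm{in}}$.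
   Context: $p_{\mathrm{in}},q_{\mathrm{out}}\in\mathbb{R}^n$ are given by $p_{\mathrm{in},i}=\mathbf{1}\{x_i\in\mathcal{X}_{\mathrm{in}}\}/n_{\mathrm{in}}$ and $q_{\mathrm{out},i}=\mathbf{1}\{x_i\in\mathcal{X}_{\mathrm{out}}\}/n_{\mathrm{out}}$. $\mathrm{MMD}_K(p,q):=\sqrt{(p-q)^\top K(p-q)}$ and $\|K(p_{\mathrm{in}}-q_{\mathrm{out}})\|_{\mathcal{I}}:=\max_{i\in\mathcal{I}}|e_i^\top K(p_{\mathrm{in}}-q_{\mathrm{out}})|$, with $e_i$ the $i$-th standard basis vector. *)

From mathcomp Require Import all_boot all_order all_algebra.
Set Implicit Arguments. Unset Strict Implicit. Unset Printing Implicit Defensive.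
Import Order.TTheory GRing.Theory Num.Theory.
Local Open Scope ring_scope.

Section Defs.
Variables (R : realFieldType) (n : nat).

Definition ind_vec (A : {set 'I_n}) : 'cV[R]_n :=
  \col_i ((i \in A)%:R / #|A|%:R).

Definition MMD2 (K : 'M[R]_n) (p q : 'cV[R]_n) : R :=
  (((p - q)^T *m K *m (p - q)) 0 0).

Definition normI (I : {set 'I_n}) (v : 'cV[R]_n) : R :=
  \big[Num.max/0]_(i in I) `|v i 0|.

Definition CM (p : 'cV[R]_n) (M : 'M[R]_n) : R :=
  \sum_i p i 0 * M i i - ((p^T *m M *m p) 0 0).

Definition e_ (i : 'I_n) : 'cV[R]_n := delta_mx i 0.

Definition psd (K : 'M[R]_n) : Prop :=
  K^T = K /\ forall v : 'cV[R]_n, 0 <= (v^T *m K *m v) 0 0.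

Definition subsamples (Xin : {set 'I_n}) (m : nat) : {set {set 'I_n}} :=
  [set S : {set 'I_n} | (S \subset Xin) && (#|S| == m)].

Definition Esub (Xin : {set 'I_n}) (m : nat) (f : {set 'I_n} -> R) : R :=
  (\sum_(S in subsamples Xin m) f S) / #|subsamples Xin m|%:R.

End Defs.

(* Let q be the normalised indicator of the random m-subset S of A, and
   N = #|A|.  Since S contains a given point of A in a fraction m/N of the
   draws, and two given points in a fraction m(m-1)/(N(N-1)), one gets
   E q_a = p_a and E q_a q_b = p_a p_b + c ([a = b] p_a - p_a p_b), with the
   finite-population factor c = (N - m)/(m (N - 1)).  The expected MMD^2 is
   the pairing of K with this covariance, which is c C_K; only the symmetry
   of K is used.  For the second claim, ||K(p - q)||_I^2 dominates
   (K(p - q))_i^2 = (p - q)^T K e_i e_i^T K (p - q) for every i in I, whose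
   expectation is c C_{K e_i e_i^T K} by the first claim. *)

From mathcomp Require Import all_boot all_order all_algebra.
From mathcomp Require Import ring lra.
Set Implicit Arguments. Unset Strict Implicit. Unset Printing Implicit Defensive.
Import Order.TTheory GRing.Theory Num.Theory.
Local Open Scope ring_scope.

Section SubsampleCounting.
Variable n : nat.
Implicit Types (A S T : {set 'I_n}) (k : nat).

Lemma card_subsamples A k : #|subsamples A k| = 'C(#|A|, k).
Proof. exact: cards_draws. Qed.

Lemma subsamples0_mem A i (P : pred {set 'I_n}) :
  (forall S, P S -> i \in S) -> [set S in subsamples A 0 | P S] = set0.
Proof.
move=> PS_i; apply/setP => S; rewrite !inE cards_eq0; apply/negbTE.
by apply/andP => -[/andP[_ /eqP->]] /PS_i; rewrite inE.
Qed.

Lemma card_subsamples_setD1 A k i (P : pred {set 'I_n}) : i \in A ->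
  #|[set S in subsamples A k.+1 | (i \in S) && P S]| =
  #|[set T in subsamples (A :\ i) k | P (i |: T)]|.
Proof.
move=> iA; have notin_sub T : T \subset A :\ i -> i \notin T.
  by move=> sTA; apply/negP => /(subsetP sTA); rewrite !inE eqxx.
rewrite -[RHS](@card_in_imset _ _ (fun T => i |: T)); last first.
  move=> T1 T2; rewrite !inE => /andP[/andP[/notin_sub iT1 _] _].
  move=> /andP[/andP[/notin_sub iT2 _] _] eqT.
  by rewrite -(setU1K iT1) -(setU1K iT2) eqT.
apply: eq_card => S; rewrite !inE; apply/andP/imsetP.
  case=> /andP[sSA /eqP cardS] /andP[iS PS].
  exists (S :\ i); last by rewrite setD1K.
  rewrite !inE setD1K // PS setSD //=.
  by move: cardS; rewrite (cardsD1 i S) iS add1n andbT => -[->].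
case=> T; rewrite !inE => /andP[/andP[sTA /eqP cardT] PT] ->.
rewrite cardsU1 (notin_sub _ sTA) cardT setU11 PT subUset sub1set iA.
by rewrite (subset_trans sTA (subsetDl _ _)) add1n eqxx.
Qed.

Lemma card_subsamples_mem A k i : i \in A ->
  (#|[set S in subsamples A k | i \in S]| * #|A| = 'C(#|A|, k) * k)%N.
Proof.
move=> iA; case: k => [|k]; first by rewrite (@subsamples0_mem _ i) ?cards0 ?muln0.
have -> : [set S in subsamples A k.+1 | i \in S] =
          [set S in subsamples A k.+1 | (i \in S) && true].
  by apply/setP => S; rewrite !inE andbT.
rewrite card_subsamples_setD1 // (cardsD1 i A) iA /=.
have -> : [set T in subsamples (A :\ i) k | true] = subsamples (A :\ i) k.
  by apply/setP => T; rewrite !inE andbT.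
by rewrite card_subsamples mulnC mul_bin_diag mulnC.
Qed.

Lemma card_subsamples_mem2 A k i j : i \in A -> j \in A -> i != j ->
  (#|[set S in subsamples A k | (i \in S) && (j \in S)]| * (#|A| * #|A|.-1)
   = 'C(#|A|, k) * (k * k.-1))%N.
Proof.
move=> iA jA neq_ij; case: k => [|k].
  by rewrite (@subsamples0_mem _ i) ?cards0 ?muln0 // => S /andP[].
rewrite card_subsamples_setD1 //.
have -> : [set T in subsamples (A :\ i) k | j \in i |: T] =
          [set T in subsamples (A :\ i) k | j \in T].
  by apply/setP => T; rewrite !inE [j == i]eq_sym (negbTE neq_ij).
have jAi : j \in A :\ i by rewrite !inE eq_sym neq_ij.
have := card_subsamples_mem k jAi; rewrite (cardsD1 i A) iA /=.
set c := #|_|; set a := #|A :\ i| => cnt.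
have -> : (c * (a.+1 * a) = a.+1 * (c * a))%N by ring.
by rewrite cnt mulnA mul_bin_diag; ring.
Qed.

End SubsampleCounting.

Lemma quad_formE (R : comPzRingType) n (x : 'cV[R]_n) (M : 'M[R]_n) :
  (x^T *m M *m x) 0 0 = \sum_a \sum_b x a 0 * M a b * x b 0.
Proof.
rewrite mxE; under eq_bigr => b _ do rewrite mxE mulr_suml.
by rewrite exchange_big; apply: eq_bigr => a _; apply: eq_bigr => b _; rewrite mxE.
Qed.

Section SubsampleExpectation.
Variables (R : realFieldType) (n : nat) (A : {set 'I_n}) (m : nat).
Implicit Types (f g : {set 'I_n} -> R).
Local Notation E := (Esub A m).

Lemma Esub_eq_in f g : {in subsamples A m, f =1 g} -> E f = E g.
Proof. by move=> eq_fg; rewrite /Esub (eq_bigr _ eq_fg). Qed.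

Lemma Esub_sum (I : Type) (r : seq I) (P : pred I) (F : I -> {set 'I_n} -> R) :
  E (fun S => \sum_(i <- r | P i) F i S) = \sum_(i <- r | P i) E (F i).
Proof. by rewrite /Esub exchange_big mulr_suml. Qed.

Lemma EsubB f g : E (fun S => f S - g S) = E f - E g.
Proof. by rewrite /Esub sumrB mulrBl. Qed.

Lemma EsubD f g : E (fun S => f S + g S) = E f + E g.
Proof. by rewrite /Esub big_split mulrDl. Qed.

Lemma EsubZl a f : E (fun S => a * f S) = a * E f.
Proof. by rewrite /Esub -mulr_sumr mulrA. Qed.

Lemma Esub_le f g : (forall S, f S <= g S) -> E f <= E g.
Proof. by move=> le_fg; rewrite ler_wpM2r ?invr_ge0 ?ler0n ?ler_sum. Qed.

Lemma Esub_ge0 f : (forall S, 0 <= f S) -> 0 <= E f.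
Proof. by move=> f_ge0; rewrite divr_ge0 ?ler0n ?sumr_ge0. Qed.

Lemma Esub_indicator (P : pred {set 'I_n}) :
  E (fun S => (P S)%:R : R) =
  #|[set S in subsamples A m | P S]|%:R / #|subsamples A m|%:R.
Proof.
rewrite /Esub; congr (_ / _).
rewrite -sum1_card natr_sum big_mkcond [RHS]big_mkcond /=.
by apply: eq_bigr => S _; rewrite [in RHS]inE; case: (S \in _); case: (P S).
Qed.

Lemma Esub0 : E (fun=> 0 : R) = 0.
Proof. by rewrite /Esub big1 ?mul0r. Qed.

Lemma Esub_indicator_notin a (P : pred {set 'I_n}) : a \notin A ->
  (forall S, P S -> a \in S) -> E (fun S => (P S)%:R : R) = 0.
Proof.
move=> aNA PS_a; rewrite -Esub0; apply: Esub_eq_in => S.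
rewrite inE => /andP[sSA _]; apply/eqP; rewrite pnatr_eq0 eqb0.
by apply: contra aNA => /PS_a/(subsetP sSA).
Qed.

Lemma Esub_cst (a : R) : (m <= #|A|)%N -> E (fun=> a) = a.
Proof.
move=> le_mA; rewrite /Esub sumr_const -[a *+ _]mulr_natr mulfK //.
by rewrite pnatr_eq0 card_subsamples -lt0n bin_gt0.
Qed.

End SubsampleExpectation.

Section SubsampleMoments.
Variables (R : realFieldType) (n : nat) (A : {set 'I_n}) (m : nat).
Hypotheses (A_ge2 : (2 <= #|A|)%N) (m_gt0 : (0 < m)%N) (m_leA : (m <= #|A|)%N).
Local Notation E := (Esub A m).
Local Notation p := (ind_vec R A).
Local Notation N := (#|A|%:R : R).
Local Notation M := (m%:R : R).
Let c : R := M^-1 * ((N - M) / (N - 1)).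

Let N_ge2 : 2 <= N. Proof. by rewrite ler_nat. Qed.
Let M_ge1 : 1 <= M. Proof. by rewrite ler1n. Qed.
Let binN_gt0 : 0 < 'C(#|A|, m)%:R :> R. Proof. by rewrite ltr0n bin_gt0. Qed.

Lemma Esub_mem a : E (fun S => (a \in S)%:R) = (a \in A)%:R * M / N.
Proof.
have [aA | aNA] := boolP (a \in A); last first.
  by rewrite (Esub_indicator_notin _ _ aNA) ?mul0r.
rewrite Esub_indicator card_subsamples.
move: (card_subsamples_mem m aA) => /(congr1 (fun k => k%:R : R)); rewrite !natrM.
set C := #|_|%:R => cnt; have N2 := N_ge2; have B0 := binN_gt0.
have -> : C = 'C(#|A|, m)%:R * M / N by rewrite -cnt mulfK //; lra.
by rewrite /= mulr1n; field; lra.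
Qed.

Lemma Esub_mem2 a b : a != b ->
  E (fun S => ((a \in S) && (b \in S))%:R) =
  ((a \in A) && (b \in A))%:R * (M * (M - 1)) / (N * (N - 1)).
Proof.
move=> neq_ab.
have [aA | aNA] := boolP (a \in A); last first.
  by rewrite (Esub_indicator_notin _ _ aNA) ?mul0r // => S /andP[].
have [bA | bNA] := boolP (b \in A); last first.
  by rewrite (Esub_indicator_notin _ _ bNA) ?andbF ?mul0r // => S /andP[].
rewrite Esub_indicator card_subsamples.
move: (card_subsamples_mem2 m aA bA neq_ab) => /(congr1 (fun k => k%:R : R)).
rewrite !natrM -!subn1 !natrB ?(ltnW A_ge2) //.
set C := #|_|%:R => cnt; have N2 := N_ge2; have M1 := M_ge1; have B0 := binN_gt0.
have -> : C = 'C(#|A|, m)%:R * (M * (M - 1)) / (N * (N - 1)).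
  by rewrite -cnt mulfK // mulf_neq0 //; lra.
by rewrite /= mulr1n; field; lra.
Qed.

Local Notation q S := (ind_vec R S).

Lemma Esub_ind_vec a : E (fun S => q S a 0) = p a 0.
Proof.
rewrite (Esub_eq_in (g := fun S => M^-1 * (a \in S)%:R)); last first.
  by move=> S; rewrite inE => /andP[_ /eqP cardS]; rewrite mxE cardS mulrC.
have N2 := N_ge2; have M1 := M_ge1.
by rewrite EsubZl Esub_mem mxE; field; lra.
Qed.

Lemma Esub_ind_vec_mul a b : E (fun S => q S a 0 * q S b 0) =
  p a 0 * p b 0 + c * ((a == b)%:R * p a 0 - p a 0 * p b 0).
Proof.
rewrite (Esub_eq_in (g := fun S => M^-2 * ((a \in S) && (b \in S))%:R)); last first.
  move=> S; rewrite inE => /andP[_ /eqP cardS].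
  have M1 := M_ge1; rewrite !mxE cardS {cardS}.
  by case: (a \in S); case: (b \in S); rewrite /=; field; lra.
have N2 := N_ge2; have M1 := M_ge1; rewrite EsubZl !mxE /c.
have [<- | neq_ab] := eqVneq a b.
  under Esub_eq_in => S _ do rewrite andbb.
  by rewrite Esub_mem; case: (a \in A); rewrite /= ?mulr1n; field; lra.
rewrite Esub_mem2 //=; case: (a \in A); case: (b \in A); rewrite /= ?mulr1n;
  field; lra.
Qed.

Lemma Esub_ind_vec_cov a b :
  E (fun S => (p - q S) a 0 * (p - q S) b 0) =
  c * ((a == b)%:R * p a 0 - p a 0 * p b 0).
Proof.
rewrite (Esub_eq_in (g := fun S =>
  p a 0 * p b 0 - p a 0 * q S b 0 - p b 0 * q S a 0 + q S a 0 * q S b 0)).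
  by rewrite EsubD !EsubB !EsubZl Esub_cst // !Esub_ind_vec Esub_ind_vec_mul; ring.
by move=> S _; rewrite !mxE; ring.
Qed.

Lemma Esub_MMD2 (K : 'M[R]_n) : E (fun S => MMD2 K p (q S)) = c * CM p K.
Proof.
rewrite (Esub_eq_in (g := fun S =>
  \sum_a \sum_b K a b * ((p - q S) a 0 * (p - q S) b 0))); last first.
  move=> S _; rewrite /MMD2 quad_formE.
  by apply: eq_bigr => a _; apply: eq_bigr => b _; ring.
rewrite Esub_sum; under eq_bigr => a _ do rewrite Esub_sum.
under eq_bigr => a _ do under eq_bigr => b _ do rewrite EsubZl Esub_ind_vec_cov.
have diag a : \sum_b (a == b)%:R * (p a 0 * K a b) = p a 0 * K a a.
  rewrite (bigD1 a) //= eqxx mul1r big1 ?addr0 // => b neq_ba.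
  by rewrite eq_sym (negbTE neq_ba) mul0r.
transitivity (\sum_a \sum_b
  (c * ((a == b)%:R * (p a 0 * K a b)) - c * (p a 0 * K a b * p b 0))).
  by apply: eq_bigr => a _; apply: eq_bigr => b _; ring.
under eq_bigr => a _ do rewrite sumrB -!mulr_sumr diag.
by rewrite sumrB -!mulr_sumr /CM quad_formE mulrBr.
Qed.

End SubsampleMoments.

Lemma quad_form_delta_sym (R : realFieldType) n (K : 'M[R]_n) (x : 'cV[R]_n) i :
  K^T = K -> (x^T *m (K *m e_ R i *m (e_ R i)^T *m K) *m x) 0 0 = (K *m x) i 0 ^+ 2.
Proof.
move=> symK; have row_i : ((e_ R i)^T *m K *m x) 0 0 = (K *m x) i 0.
  by rewrite /e_ trmx_delta -mulmxA -rowE mxE.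
have col_i : (x^T *m K *m e_ R i) 0 0 = (K *m x) i 0.
  transitivity ((x^T *m K *m e_ R i)^T 0 0); first by rewrite [RHS]mxE.
  by rewrite !trmx_mul trmxK symK mulmxA row_i.
have -> : x^T *m (K *m e_ R i *m (e_ R i)^T *m K) *m x =
          (x^T *m K *m e_ R i) *m ((e_ R i)^T *m K *m x) by rewrite !mulmxA.
by rewrite mxE big_ord1 col_i row_i expr2.
Qed.

Lemma sqr_le_normI (R : realFieldType) n (I : {set 'I_n}) (v : 'cV[R]_n) i :
  i \in I -> v i 0 ^+ 2 <= normI I v ^+ 2.
Proof.
move=> iI; rewrite -real_normK ?num_real // ler_sqr ?nnegrE ?bigmax_ge_id //.
by rewrite /normI; apply: le_bigmax_cond.
Qed.

Theorem proposition1 (R : realFieldType) (n : nat) (Xin : {set 'I_n}) (nout : nat)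
  (hin : (2 <= #|Xin|)%N) (hout1 : (1 <= nout)%N) (hout2 : (nout <= #|Xin|)%N)
  (K : 'M[R]_n) (hK : psd K) (I : {set 'I_n}) :
  let pin := ind_vec R Xin in
  let c := (nout%:R)^-1 * ((#|Xin|%:R - nout%:R) / (#|Xin|%:R - 1)) in
  Esub Xin nout (fun Xout => MMD2 K pin (ind_vec R Xout)) = c * CM pin K /\
  Esub Xin nout (fun Xout => normI I (K *m (pin - ind_vec R Xout)) ^+ 2)
    >= c * \big[Num.max/0]_(i in I) CM pin (K *m e_ R i *m (e_ R i)^T *m K).
Proof.
move=> pin c; have [symK _] := hK.
split; first exact: Esub_MMD2 hin hout1 hout2 K.
elim/big_ind: _ => [|x y lex ley|i iI].
- by rewrite mulr0 Esub_ge0 // => S; apply: sqr_ge0.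
- by case: (leP x y).
- rewrite -(Esub_MMD2 hin hout1 hout2); apply: Esub_le => S.
  by rewrite /MMD2 quad_form_delta_sym // sqr_le_normI.
Qed.
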